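(* Let $\lambda=(\lambda_1,\dots,\lambda_l)$ and $\mu=(\mu_1,\dots,\mu_m)$ be decompositions of $n$ with $1<\mu_m<\lambda_l$, and let $\mu'=(\mu_1,\dots,\mu_{m-1},\mu_m-1,1)$. Then $P_{\lambda|\mu'}\le P_{\lambda|\mu}$ has index $[P_{\lambda|\mu}:P_{\lambda|\mu'}]=2^{\mu_m}-1$.
   Context: A decomposition of $N$ is a finite sequence of positive integers with sum $N$. For a decomposition $\lambda=(\lambda_1,\dots,\lambda_l)$ of $N$, $P_\lambda\le\mathrm{GL}_N(\mathbb{F}_2)$ is the standard parabolic subgroup of invertible block upper triangular matrices with diagonal blocks of sizes $\lambda_1,\dots,\lambda_l$ in this order. $P_\mu^t$ is the group of transposes of elements of $P_\mu$, and $P_{\lambda|\mu}=P_\lambda\cap P_\mu^t$. *)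

From mathcomp Require Import all_boot all_order all_algebra all_fingroup.
Set Implicit Arguments. Unset Strict Implicit. Unset Printing Implicit Defensive.

Definition decomposition (s : seq nat) (N : nat) : bool :=
  all (fun x => 0 < x) s && (sumn s == N).

(* Index (0-based) of the diagonal block containing row/column i (0-based),
   for the block sizes s: the number of k < size s with
   s_1 + ... + s_(k+1) <= i. *)
Definition blk (s : seq nat) (i : nat) : nat :=
  count (fun k => sumn (take k.+1 s) <= i) (iota 0 (size s)).

(* Standard parabolic subgroup P_s of GL_N(F_2): invertible block upper
   triangular matrices with diagonal blocks of sizes given by s. *)
Definition parabolic (N : nat) (s : seq nat) : {set {'GL_N['F_2]}} :=
  [set g : {'GL_N['F_2]} | [forall i : 'I_N.-1.+1, forall j : 'I_N.-1.+1,
       (blk s j < blk s i) ==> (GLval g i j == 0%R)]].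

Definition parabolic_tr (N : nat) (s : seq nat) : {set {'GL_N['F_2]}} :=
  [set g : {'GL_N['F_2]} | [exists h in parabolic N s, GLval g == trmx (GLval h)]].

Definition Pbar (N : nat) (la mu : seq nat) : {set {'GL_N['F_2]}} :=
  parabolic N la :&: parabolic_tr N mu.

From mathcomp Require Import all_boot all_order all_algebra all_fingroup.
From mathcomp Require Import zify.
Set Implicit Arguments. Unset Strict Implicit. Unset Printing Implicit Defensive.

(* G := P_{la|mu} acts on column vectors of F_2^n, and P_{la|mu'} is the
   stabiliser in G of the last basis vector e.  Transposed block triangularity
   for mu confines the orbit of e to the nonzero vectors supported on the last
   mu-block B; conversely, since B lies inside the last la-block, every
   transvection 1 + x y with x, y supported on B and y x = 0 lies in G, and these
   already move e to any nonzero vector supported on B.  Orbit-stabiliser then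
   gives the index 2^|B| - 1. *)

Import GRing.Theory.

Lemma sumn_take_le (s : seq nat) k : sumn (take k s) <= sumn s.
Proof. by rewrite -{2}(cat_take_drop k s) sumn_cat leq_addr. Qed.

Lemma blk_rcons s x i : blk (rcons s x) i = blk s i + (sumn s + x <= i).
Proof.
rewrite /blk size_rcons -addn1 iotaD count_cat /= add0n addn0.
congr (_ + _).
  apply: eq_in_count => k; rewrite mem_iota /= add0n => lt_ks.
  by rewrite -cats1 takel_cat.
by rewrite take_oversize ?size_rcons // sumn_rcons.
Qed.

Lemma blk_rcons_lt s x i : i < sumn s + x -> blk (rcons s x) i = blk s i.
Proof. by rewrite blk_rcons ltnNge => /negbTE ->; rewrite addn0. Qed.

Lemma blk_le s i : blk s i <= size s.
Proof. by rewrite /blk -{2}(size_iota 0 (size s)) count_size. Qed.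

Lemma blk_max s i : sumn s <= i -> blk s i = size s.
Proof.
move=> le_si; rewrite /blk -[RHS](size_iota 0 (size s)) -[RHS]count_predT.
by apply: eq_in_count => k _ /=; apply: leq_trans (sumn_take_le _ _) le_si.
Qed.

Lemma blk_lt_size s i : (blk s i < size s) = (i < sumn s).
Proof.
case: (ltnP i (sumn s)) => [|/blk_max->]; last by rewrite ltnn.
case/lastP: s => [|s x] //; rewrite sumn_rcons size_rcons => lt_i.
by rewrite blk_rcons_lt // ltnS blk_le.
Qed.

Lemma ltn_cotrans (x y z : nat) : x < y -> (x < z) || (z < y).
Proof. by case: (ltnP x z) => //= /leq_ltn_trans; apply. Qed.

Lemma card_ord_geq N a : #|[pred i : 'I_N | a <= i]| = N - a.
Proof.
rewrite cardE /enum_mem size_filter -enumT -(count_map val (leq a)) val_enum_ord.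
by elim: N => [|N IH] //; rewrite -addn1 iotaD count_cat IH /=; lia.
Qed.

Local Open Scope ring_scope.

Section VanishingPattern.
Variables (R : finComUnitRingType) (N : nat) (r : rel 'I_N.-1.+1).

Definition GL_vanish : {set {'GL_N[R]}} :=
  [set g | [forall i, forall j, r i j ==> (GLval g i j == 0)]].

Lemma GL_vanishP g :
  reflect (forall i j, r i j -> GLval g i j = 0) (g \in GL_vanish).
Proof.
rewrite inE; apply: (iffP forallP) => [van i j rij|van i].
  by apply/eqP; apply: (implyP (forallP (van i) j)).
by apply/forallP=> j; apply/implyP=> /van->.
Qed.

Hypotheses (r_irr : irreflexive r)
           (r_cotrans : forall i j k, r i j -> r i k || r k j).

Lemma mulmx_vanish (A B : 'M[R]_N.-1.+1) :
    (forall i j, r i j -> A i j = 0) -> (forall i j, r i j -> B i j = 0) ->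
  forall i j, r i j -> (A *m B) i j = 0.
Proof.
move=> A0 B0 i j rij; rewrite mxE big1 // => k _.
by case/orP: (r_cotrans k rij) => [/A0-> | /B0->]; rewrite ?mul0r ?mulr0.
Qed.

Lemma group_set_GL_vanish : group_set GL_vanish.
Proof.
apply/group_setP; split.
  apply/GL_vanishP => i j rij; rewrite GL_1E mxE.
  by case: eqP rij => [->|_]; rewrite ?r_irr.
move=> g h /GL_vanishP g0 /GL_vanishP h0; apply/GL_vanishP.
by rewrite GL_MxE; apply: mulmx_vanish.
Qed.

End VanishingPattern.

Arguments GL_vanish {R N} r.
Arguments GL_vanishP {R N r g}.

Lemma parabolicE N s :
  parabolic N s = GL_vanish (fun i j => (blk s j < blk s i)%N).
Proof. by []. Qed.

Lemma parabolic_trE N s :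
  parabolic_tr N s = GL_vanish (fun i j => (blk s i < blk s j)%N).
Proof.
apply/setP=> g; rewrite inE; apply/existsP/GL_vanishP => [[h /andP[]]|van].
  move=> /GL_vanishP h0 /eqP-> i j lt_ij; rewrite mxE; exact: h0.
have uT : (GLval g)^T \in unitmx by rewrite unitmx_tr GL_unitmx.
exists (Sub (GLval g)^T uT : {'GL_N['F_2]}); rewrite SubK trmxK eqxx andbT.
by apply/GL_vanishP => i j lt_ji; rewrite mxE van.
Qed.

Lemma group_set_parabolic N s : group_set (parabolic N s).
Proof.
rewrite parabolicE; apply: group_set_GL_vanish => [i|i j k]; first exact: ltnn.
by rewrite orbC; apply: ltn_cotrans.
Qed.

Lemma group_set_parabolic_tr N s : group_set (parabolic_tr N s).
Proof.
rewrite parabolic_trE; apply: group_set_GL_vanish => [i|i j k]; first exact: ltnn.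
exact: ltn_cotrans.
Qed.

Canonical parabolic_group N s := Group (group_set_parabolic N s).
Canonical parabolic_tr_group N s := Group (group_set_parabolic_tr N s).
Canonical Pbar_group N la mu := [group of Pbar N la mu].

Lemma PbarP N la mu (g : {'GL_N['F_2]}) :
  reflect ((forall i j : 'I_N.-1.+1, (blk la j < blk la i)%N -> GLval g i j = 0) /\
           (forall i j : 'I_N.-1.+1, (blk mu i < blk mu j)%N -> GLval g i j = 0))
          (g \in Pbar N la mu).
Proof.
rewrite /Pbar in_setI parabolicE parabolic_trE.
by apply: (iffP andP) => -[/GL_vanishP-g_la /GL_vanishP-g_mu].
Qed.

Definition cV_tail (R : finZmodType) N a : {set 'cV[R]_N} :=
  [set v : 'cV[R]_N | [forall i : 'I_N, (i < a)%N ==> (v i 0 == 0)]].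

Lemma cV_tailP (R : finZmodType) N a (v : 'cV[R]_N) :
  reflect (forall i : 'I_N, (i < a)%N -> v i 0 = 0) (v \in cV_tail R N a).
Proof.
rewrite inE; apply: (iffP forallP) => [v0 i lt_ia|v0 i].
  by apply/eqP; apply: (implyP (v0 i)).
by apply/implyP=> /v0->.
Qed.

Lemma card_cV_tail (R : finZmodType) N a :
  #|cV_tail R N a| = (#|R| ^ (N - a))%N.
Proof.
pose f (v : 'cV[R]_N) := [ffun i => v i 0].
have f_inj : injective f.
  move=> v w /ffunP fvw; apply/matrixP => i j.
  by rewrite (ord1 j); have := fvw i; rewrite !ffunE.
rewrite -card_ord_geq -(card_pffun_on 0 _ predT) -(card_imset _ f_inj).
apply: eq_card => F; apply/imsetP/pffun_onP => [[v /cV_tailP v0 ->]|[]].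
  split=> [|x _] //.
  by apply/supportP => i; rewrite inE -ltnNge ffunE => /v0.
move=> /supportP F0 _; exists (\col_i F i); last by apply/ffunP => i; rewrite !ffunE mxE.
by apply/cV_tailP => i lt_ia; rewrite mxE F0 // inE -ltnNge.
Qed.

Lemma transvection_unit (R : comUnitRingType) N (x : 'cV[R]_N) (y : 'rV[R]_N) :
  y *m x = 0 -> 1%:M + x *m y \in unitmx.
Proof.
move=> yx0; suff /mulmx1_unit[] : (1%:M + x *m y) *m (1%:M - x *m y) = 1%:M by [].
rewrite mulmxDl !mul1mx mulmxBr mulmx1 -mulmxA (mulmxA y) yx0 mul0mx mulmx0.
by rewrite subr0 subrK.
Qed.

Section ColumnAction.
Variables (R : finComUnitRingType) (N : nat).

(* Inverting g turns left multiplication into a right action, as fingroup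
   actions must be. *)
Definition cV_act (v : 'cV[R]_N.-1.+1) (g : {'GL_N[R]}) := GLval g^-1 *m v.

Lemma cV_act1 : cV_act^~ 1%g =1 id.
Proof. by move=> v; rewrite /cV_act invg1 GL_1E mul1mx. Qed.

Lemma cV_actM v : act_morph cV_act v.
Proof. by move=> g h; rewrite /cV_act invMg GL_MxE mulmxA. Qed.

Definition cV_action := TotalAction cV_act1 cV_actM.

Lemma orbit_cV_action (G : {group {'GL_N[R]}}) v :
  orbit cV_action G v = [set GLval g *m v | g in G].
Proof.
apply/setP => w; apply/orbitP/imsetP => [[g Gg <-]|[g Gg ->]].
  by exists g^-1%g; rewrite ?groupV.
by exists g^-1%g; rewrite ?groupV //= /cV_act invgK.
Qed.

Lemma astab1_cV_action g v : (g \in 'C[v | cV_action]%g) = (GLval g *m v == v).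
Proof.
by apply/astab1P/eqP => /= gv;
  rewrite -{1}gv /cV_act mulmxA -GL_MxE ?mulgV ?mulVg GL_1E mul1mx.
Qed.

Lemma GL_mulmx_eq0 g (v : 'cV[R]_N.-1.+1) : (GLval g *m v == 0) = (v == 0).
Proof.
apply/eqP/eqP => [gv0|->]; last exact: mulmx0.
by rewrite -(mulKmx (GL_unitmx g) v) gv0 mulmx0.
Qed.

End ColumnAction.

Lemma delta_mx_neq0 (R : nzRingType) m n (i : 'I_m) (j : 'I_n) :
  delta_mx i j != 0 :> 'M[R]_(m, n).
Proof. by apply/eqP => /matrixP/(_ i j)/eqP; rewrite !mxE !eqxx oner_eq0. Qed.

Lemma F2_neq0 (a : 'F_2) : a != 0 -> a = 1.
Proof. by case: a => [[|[|[]]] ?] //= _; apply/val_inj. Qed.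

Lemma GL_F2_fix_delta N (g : {'GL_N['F_2]}) k :
  (forall i, i != k -> GLval g i k = 0) ->
  GLval g *m delta_mx k 0 = delta_mx k 0 :> 'cV_N.-1.+1.
Proof.
move=> gk0; have col_gk i : (GLval g *m delta_mx k 0 : 'cV_N.-1.+1) i 0 = GLval g i k.
  by rewrite -colE mxE.
have gkk : GLval g k k = 1.
  apply: F2_neq0; apply: contraNneq (@delta_mx_neq0 'F_2 _ 1 k 0).
  rewrite -(GL_mulmx_eq0 g) => gkk0; apply/eqP/matrixP => i j.
  by rewrite (ord1 j) col_gk mxE; case: (eqVneq i k) => [->|/gk0].
apply/matrixP => i j; rewrite (ord1 j) col_gk mxE eqxx andbT.
by case: (eqVneq i k) => [->|/gk0->].
Qed.

Lemma F2_dual_tail N a (k : 'I_N) (v : 'cV['F_2]_N) :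
  (a <= k)%N -> v \in cV_tail _ N a -> v != 0 ->
  exists y : 'rV['F_2]_N,
    [/\ y^T \in cV_tail _ N a, y *m delta_mx k 0 = 1 & y *m v = 1].
Proof.
move=> le_ak /cV_tailP v0 nz_v; have [j vj] : exists j, v j 0 != 0.
  apply/existsP; apply: contraR nz_v; rewrite negb_exists => /forallP vj0.
  by apply/eqP/matrixP => i l; rewrite (ord1 l) mxE; apply/eqP/negPn/vj0.
have le_aj : (a <= j)%N by case: ltnP => // /v0 vj0; rewrite vj0 eqxx in vj.
have head_neq (i l : 'I_N) : (i < a)%N -> (a <= l)%N -> (i == l) = false.
  by move=> lt_ia le_al; exact: ltn_eqF (leq_trans lt_ia le_al).
have dk1 : delta_mx 0 k *m delta_mx k 0 = 1 :> 'M['F_2]_1.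
  by rewrite mul_delta_mx; apply/matrixP => i l; rewrite (ord1 i) (ord1 l) !mxE.
have [vk0|/F2_neq0 vk1] := eqVneq (v k 0) 0.
- exists (delta_mx 0 k + delta_mx 0 j); split.
  + by apply/cV_tailP => i lt_ia; rewrite !mxE !head_neq // !andbF addr0.
  + have ne_jk : j != k by apply: contraNneq vj => ->; rewrite vk0.
    by rewrite mulmxDl dk1 mul_delta_mx_0 ?addr0.
  + apply/matrixP => i l; rewrite (ord1 i) (ord1 l) mulmxDl -!rowE !mxE.
    by rewrite vk0 (F2_neq0 vj) add0r.
- exists (delta_mx 0 k); split=> //.
  + by apply/cV_tailP => i lt_ia; rewrite !mxE head_neq // andbF.
  + by rewrite -rowE; apply/matrixP => i l; rewrite (ord1 i) (ord1 l) !mxE.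
Qed.

Section SplitLastBlock.
Variables (n : nat) (la0 mu0 : seq nat) (lal mum : nat).
Hypotheses (sum_la : (sumn la0 + lal = n.+1)%N) (sum_mu : (sumn mu0 + mum = n.+1)%N).
Hypotheses (mum_gt0 : (0 < mum)%N) (mum_le_lal : (mum <= lal)%N).

Local Notation la := (rcons la0 lal).
Local Notation mu := (rcons mu0 mum).
Local Notation mu' := (mu0 ++ [:: mum.-1; 1%N]).
Local Notation G := (Pbar n.+1 la mu).
Local Notation H := (Pbar n.+1 la mu').
Local Notation act := (cV_action 'F_2 n.+1).
Local Notation e := (delta_mx ord_max 0 : 'cV['F_2]_n.+1).
Local Notation tail := (cV_tail 'F_2 n.+1 (sumn mu0)).

Lemma blk_la_le (i : 'I_n.+1) : (blk la i <= size la0)%N.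
Proof. by rewrite blk_rcons_lt ?sum_la // blk_le. Qed.

Lemma blk_la_tail (i : 'I_n.+1) : (sumn mu0 <= i)%N -> blk la i = size la0.
Proof. by move=> le_i; rewrite blk_rcons_lt ?sum_la //; apply: blk_max; lia. Qed.

Lemma blk_mu_le (i : 'I_n.+1) : (blk mu i <= size mu0)%N.
Proof. by rewrite blk_rcons_lt ?sum_mu // blk_le. Qed.

Lemma blk_mu_lt (i : 'I_n.+1) : (blk mu i < size mu0)%N = (i < sumn mu0)%N.
Proof. by rewrite blk_rcons_lt ?sum_mu // blk_lt_size. Qed.

Lemma blk_mu_max : blk mu (@ord_max n) = size mu0.
Proof. by apply/eqP; rewrite eqn_leq blk_mu_le leqNgt blk_mu_lt /=; lia. Qed.

Lemma blk_mu' (i : 'I_n.+1) : blk mu' i = (blk mu i + (i == ord_max))%N.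
Proof.
have -> : mu' = rcons (rcons mu0 mum.-1) 1 by rewrite -!cats1 -catA.
rewrite blk_rcons_lt ?sumn_rcons; last by have := ltn_ord i; lia.
rewrite blk_rcons blk_rcons_lt ?sum_mu //; congr (_ + nat_of_bool _).
have -> : (sumn mu0 + mum.-1 = n)%N by lia.
by apply/idP/eqP => [le_ni|->] //; apply/val_inj => /=; have := ltn_ord i; lia.
Qed.

Lemma sub_Pbar_split : H \subset G.
Proof.
apply/subsetP => g /PbarP[g_la g_mu']; apply/PbarP; split=> // i j lt_ij.
have ne_i : i != ord_max.
  by apply: contraTneq lt_ij => ->; rewrite blk_mu_max -leqNgt blk_mu_le.
by apply: g_mu'; rewrite !blk_mu' (negbTE ne_i) addn0 (leq_trans lt_ij) ?leq_addr.
Qed.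

Lemma Pbar_split_colP g :
  g \in H <-> g \in G /\ (forall i, i != ord_max -> GLval g i ord_max = 0).
Proof.
split=> [Hg|[/PbarP[g_la g_mu] col0]].
  split; first exact: (subsetP sub_Pbar_split).
  move: Hg => /PbarP[_ g_mu'] i ne_i; apply: g_mu'.
  by rewrite !blk_mu' eqxx (negbTE ne_i) blk_mu_max addn0 addn1 ltnS blk_mu_le.
apply/PbarP; split=> // i j; rewrite !blk_mu'.
have [->|ne_j] := eqVneq j ord_max.
  by case: (eqVneq i ord_max) => [->|/col0 //]; rewrite ltnn.
by rewrite addn0 => lt_ij; apply: g_mu; apply: leq_ltn_trans lt_ij; apply: leq_addr.
Qed.

Lemma stab_Pbar_split : 'C_G[e | act]%g = H.
Proof.
apply/setP => g; rewrite in_setI astab1_cV_action.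
apply/andP/idP => [[Gg /eqP ge]|/Pbar_split_colP[Gg col]].
  apply/Pbar_split_colP; split=> // i ne_i.
  by move/matrixP/(_ i 0): ge; rewrite -colE !mxE eqxx (negbTE ne_i).
by split=> //; apply/eqP/GL_F2_fix_delta.
Qed.

Lemma transvection_in_Pbar x y :
  x \in tail -> y^T \in tail -> y *m x = 0 ->
  exists2 g, g \in G & GLval g = 1%:M + x *m y.
Proof.
move=> /cV_tailP x0 /cV_tailP y0 yx0.
exists (Sub (1%:M + x *m y) (transvection_unit yx0) : {'GL_n.+1['F_2]}) => //.
have entry i j : i != j -> (1%:M + x *m y) i j = x i 0 * y 0 j.
  by move=> ne_ij; rewrite !mxE (negbTE ne_ij) add0r big_ord1.
apply/PbarP; split=> i j lt_ij; (rewrite SubK entry;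
  last by apply: contraTneq lt_ij => ->; rewrite ltnn).
- have lt_j : (j < sumn mu0)%N.
    by rewrite ltnNge; apply: contraTN lt_ij => /blk_la_tail->; rewrite -leqNgt blk_la_le.
  by have := y0 j lt_j; rewrite mxE => ->; rewrite mulr0.
- have lt_i : (i < sumn mu0)%N by rewrite -blk_mu_lt (leq_trans lt_ij) ?blk_mu_le.
  by rewrite x0 ?mul0r.
Qed.

Lemma head_neq_last (i : 'I_n.+1) : (i < sumn mu0)%N -> (i == ord_max) = false.
Proof. by move=> lt_i; apply: ltn_eqF => /=; lia. Qed.

Lemma orbit_Pbar_split : orbit act G e = tail :\ 0.
Proof.
rewrite orbit_cV_action; apply/setP => v; rewrite in_setD1.
apply/imsetP/andP => [[g Gg ->]|[nz_v tail_v]].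
  split; first by rewrite GL_mulmx_eq0 delta_mx_neq0.
  apply/cV_tailP => i lt_i; rewrite -colE mxE.
  by move/PbarP: Gg => [_ g_mu]; apply: g_mu; rewrite blk_mu_max blk_mu_lt.
have le_last : (sumn mu0 <= @ord_max n)%N by rewrite /=; lia.
have [y [tail_y ye yv]] := F2_dual_tail le_last tail_v nz_v.
have tail_ve : v - e \in tail.
  move/cV_tailP: tail_v => v0.
  by apply/cV_tailP => i lt_i; rewrite !mxE v0 // head_neq_last // subr0.
have [|g Gg gE] := transvection_in_Pbar tail_ve tail_y; first by rewrite mulmxBr yv ye subrr.
by exists g; rewrite // gE mulmxDl mul1mx -mulmxA ye mulmx1 addrC subrK.
Qed.

Lemma index_Pbar_split : #|G : H|%g = (2 ^ mum - 1)%N.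
Proof.
rewrite -stab_Pbar_split -card_orbit orbit_Pbar_split.
have tail0 : 0 \in tail by apply/cV_tailP => i _; rewrite mxE.
have := cardsD1 0 tail; rewrite tail0 card_cV_tail card_Fp //.
have -> : (n.+1 - sumn mu0 = mum)%N by lia.
by move=> ->; rewrite addKn.
Qed.

End SplitLastBlock.

Local Close Scope ring_scope.

Theorem corollary1 (n : nat) (la0 mu0 : seq nat) (lal mum : nat) :
  decomposition (rcons la0 lal) n ->
  decomposition (rcons mu0 mum) n ->
  1 < mum < lal ->
  Pbar n (rcons la0 lal) (mu0 ++ [:: mum.-1; 1]) \subset Pbar n (rcons la0 lal) (rcons mu0 mum) /\
  indexg (Pbar n (rcons la0 lal) (rcons mu0 mum)) (Pbar n (rcons la0 lal) (mu0 ++ [:: mum.-1; 1]))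
    = 2 ^ mum - 1.
Proof.
move=> /andP[_ /eqP] + /andP[_ /eqP] + /andP[lt1_mum lt_mum_lal].
rewrite !sumn_rcons; case: n => [|n] sum_la sum_mu; first by lia.
have mum_gt0 : 0 < mum by apply: ltnW.
have mum_le_lal : mum <= lal by apply: ltnW.
by split; [apply: sub_Pbar_split | apply: index_Pbar_split].
Qed.
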